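(* For every tree embedding $(\mathcal T,\mathcal M,y)$ in the support of $\mathcal D$, the set $Z_{\mathcal T}=\bigcup\{Z_F : F\subseteq E(H),\ |F|=\ell,\ \mathcal T\text{ is good for }F\}$ satisfies $|Z_{\mathcal T}|\le q\cdot n^{2\ell}\cdot 2^{2\ell\beta}$.
   Context: Standing setup. $G=(V,E)$ is an undirected graph with $n=|V|$, demand-pairs $(S_i,T_i)$, $i\in[q]$, of subsets of $V$. $\ell\ge1$ is an integer and $E_\ell\subseteq E$ an edge set such that in $(V,E_\ell)$ every $(S_i,T_i)$ is $\ell$-edge-connected. $x:E\to[0,1]$ satisfies $x_e=1$ for $e\in E_\ell$ and $\sum_{e\in\delta_G(X)}x_e\ge \ell+1$ for every $i\in[q]$ and every $X$ with $T_i\subseteq X\subseteq V\setminus S_i$. $\beta\ge1$ is a real. $\mathsf{LARGE}=\{e: x_e\ge 1/(4\ell\beta)\}$ and $H=(V,\mathsf{LARGE})$. Capacities: $\tilde x_e=1/(4\ell\beta)$ if $e\in\mathsf{LARGE}$; $\tilde x_e=0$ if $x_e<\frac{1}{2n^2}\cdot\frac1{4\ell\beta}$; $\tilde x_e=x_e$ otherwise. A tree embedding $(\mathcal T,\mathcal M,y)$ of $(G,\tilde x)$: $\mathcal T$ is a tree; $\mathcal M$ maps nodes of $\mathcal T$ to vertices of $G$ and is a bijection between leaves of $\mathcal T$ and $V$ (a vertex set of $G$ is identified with the corresponding leaf set); each tree edge $f=(u,v)$ is mapped to a path $\mathcal M(f)$ in $G$ between $\mathcal M(u)$ and $\mathcal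 M(v)$; $y(f)=\tilde x(\delta_G(X))$ where $(X,V\setminus X)$ is the leaf partition induced by $\mathcal T-f$. $\mathcal M^{-1}(e)=\{f: e\in\mathcal M(f)\}$, $\mathcal M^{-1}(F)=\bigcup_{e\in F}\mathcal M^{-1}(e)$. $\mathcal D$ is a probability distribution over tree embeddings of $(G,\tilde x)$ with $\mathbb{E}_{\mathcal T\sim\mathcal D}[\sum_{f\in\mathcal M^{-1}(e)}y(f)]\le\beta\,\tilde x_e$ for every $e\in E$, and for every tree in its support and all disjoint $A,B\subseteq V$, the maximum $A$–$B$ flow in $\mathcal T$ under $y$ is at least the maximum $A$–$B$ flow in $G$ under $\tilde x$. A tree embedding is good for $F\subseteq E(H)$ if $\sum_{f\in\mathcal M^{-1}(F)}y(f)\le1/2$. Components: $\mathbb Q^F$ is the set of vertex sets of connected components of $(V,E(H)\setminus F)$; for nonempty $S\subseteq V$, $Q_S$ is the union of those components meeting $S$. A component $Q\in\mathbb Q^F$ is shattered (w.r.t. $\mathcal T$) if its leaves are not all in one connected component of $\mathcal T$ with the edges $\mathcal M^{-1}(F)$ removed. $\mathbb U^F_{\mathcal T}$ is the set of all partitions $(A',B')$ (parts may be empty) of the set of shattered components, and $Z_F=\{(A'\cup Q_{S_i},\,B'\cup Q_{T_i}) : (A',B')\in\mathbb U^F_{\mathcal T},\ i\in[q],\ Q_{S_i}\cap Q_{T_i}=\emptyset\}$. *)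

From HB Require Import structures.
From mathcomp Require Import all_boot all_order all_algebra.
From mathcomp Require Import reals exp.
From Stdlib Require List.

Set Implicit Arguments.
Unset Strict Implicit.
Unset Printing Implicit Defensive.

Import Order.TTheory GRing.Theory Num.Theory.
Local Open Scope ring_scope.

(* ---------- generic undirected simple graphs on a finType ----------------
   A graph is given by its vertex type N and edge set Ed : {set {set N}},
   each edge being a 2-element vertex set. *)

Definition adj (N : finType) (Ed : {set {set N}}) : rel N :=
  fun u w => [set u; w] \in Ed.

Definition ucut (N : finType) (Ed : {set {set N}}) (X : {set N}) : {set {set N}} :=
  [set e in Ed | #|e :&: X| == 1%N].

Definition components (N : finType) (Ed : {set {set N}}) : {set {set N}} :=
  [set [set w | connect (adj Ed) u w] | u : N].

Definition compQ (N : finType) (Ed : {set {set N}}) (S : {set N}) : {set N} :=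
  \bigcup_(Q in components Ed | Q :&: S != set0) Q.

Definition ell_edge_conn (N : finType) (Ed : {set {set N}}) (S T : {set N})
  (l : nat) : Prop :=
  forall X : {set N}, T \subset X -> X \subset ~: S -> (l <= #|ucut Ed X|)%N.

Definition walk_edges (N : finType) (s : seq N) : seq {set N} :=
  if s is a :: r then pairmap (fun u w => [set u; w]) a r else [::].

Definition is_path_between (N : finType) (Ed : {set {set N}}) (s : seq N)
  (a b : N) : Prop :=
  match s with
  | [::] => False
  | s0 :: r => [/\ s0 = a, last s0 r = b, uniq s & path (adj Ed) s0 r]
  end.

Definition tdeg (N : finType) (tE : {set {set N}}) (t : N) : nat :=
  #|[set f in tE | t \in f]|.

Definition is_leaf (N : finType) (tE : {set {set N}}) (t : N) : bool :=
  (tdeg tE t <= 1)%N.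

(* a tree: simple graph, connected, and acyclic (every edge is a bridge) *)
Definition is_tree (N : finType) (tE : {set {set N}}) : Prop :=
  [/\ forall f, f \in tE -> #|f| = 2%N,
      forall a b : N, connect (adj tE) a b &
      forall f (a b : N), f \in tE -> f = [set a; b] ->
        ~~ connect (adj (tE :\ f)) a b].

Section Flow.
Variable R : realType.

Definition is_flow (N : finType) (Ed : {set {set N}}) (cap : {set N} -> R)
  (A B : {set N}) (g : N -> N -> R) : Prop :=
  [/\ forall u w, g u w = - g w u,
      forall u w, [set u; w] \notin Ed -> g u w = 0,
      forall u w, `|g u w| <= cap [set u; w] &
      forall w, w \notin A :|: B -> \sum_(u : N) g w u = 0].

Definition flow_value (N : finType) (A : {set N}) (g : N -> N -> R) : R :=
  \sum_(a in A) \sum_(u : N) g a u.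

Definition xcut (N : finType) (Ed : {set {set N}}) (c : {set N} -> R)
  (X : {set N}) : R := \sum_(e in ucut Ed X) c e.
End Flow.

Record tree_emb (V : finType) := TreeEmb {
  tnode : finType;
  tedges : {set {set tnode}};
  tmap : tnode -> V;                     (* M on nodes *)
  tpath : {set tnode} -> seq V           (* M on tree edges: a path in G *)
}.

Section TreeEmb.
Variable R : realType.
Variable V : finType.
Variable E : {set {set V}}.

Definition tleaf (T : tree_emb V) (t : tnode T) : bool := is_leaf (tedges T) t.

Definition leaves_of (T : tree_emb V) (A : {set V}) : {set tnode T} :=
  [set t : tnode T | tleaf t && (tmap t \in A)].

(* one side X of the leaf partition induced by T - f *)
Definition leaf_side (T : tree_emb V) (f : {set tnode T}) : {set V} :=
  match [pick a in f] with
  | Some a => [set v | [exists t : tnode T, [&& tleaf t, tmap t == v &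
                         connect (adj (tedges T :\ f)) a t]]]
  | None => set0
  end.

Definition ty (xt : {set V} -> R) (T : tree_emb V) (f : {set tnode T}) : R :=
  xcut E xt (leaf_side f).

(* (T,M,y) is a tree embedding of (G,xt) (y is determined by ty) *)
Definition is_tree_emb (T : tree_emb V) : Prop :=
  [/\ is_tree (tedges T),
      forall v : V, exists t : tnode T, tleaf t /\ tmap t = v,
      forall t1 t2 : tnode T, tleaf t1 -> tleaf t2 ->
        tmap t1 = tmap t2 -> t1 = t2 &
      forall f, f \in tedges T -> exists a b : tnode T,
        f = [set a; b] /\ is_path_between E (tpath f) (tmap a) (tmap b)].

Definition Minv1 (T : tree_emb V) (e : {set V}) : {set {set tnode T}} :=
  [set f in tedges T | e \in walk_edges (tpath f)].
Definition MinvF (T : tree_emb V) (F : {set {set V}}) : {set {set tnode T}} :=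
  \bigcup_(e in F) Minv1 T e.

Definition flow_dominates (xt : {set V} -> R) (T : tree_emb V) : Prop :=
  forall A B : {set V}, [disjoint A & B] ->
  forall g, is_flow E xt A B g ->
  exists h, is_flow (tedges T) (ty xt (T:=T)) (leaves_of T A) (leaves_of T B) h
            /\ flow_value A g <= flow_value (leaves_of T A) h.

(* D: finitely supported probability distribution over tree embeddings of
   (G, xt), given as a list of (probability, tree embedding) pairs *)
Definition good_distribution (beta : R) (xt : {set V} -> R)
  (D : seq (R * tree_emb V)) : Prop :=
  [/\ forall p, List.In p D -> 0 <= p.1,
      \sum_(p <- D) p.1 = 1,
      forall p, List.In p D -> is_tree_emb p.2,
      forall e, e \in E ->
        \sum_(p <- D) p.1 * (\sum_(f in Minv1 p.2 e) ty xt f) <= beta * xt e &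
      forall p, List.In p D -> 0 < p.1 -> flow_dominates xt p.2].

Definition LARGE (x : {set V} -> R) (l : nat) (beta : R) : {set {set V}} :=
  [set e in E | 1 / (4 * l%:R * beta) <= x e].

Definition xtilde (x : {set V} -> R) (l : nat) (beta : R) : {set V} -> R :=
  fun e => if e \in LARGE x l beta then 1 / (4 * l%:R * beta)
           else if x e < 1 / (2 * (#|V|%:R) ^+ 2) * (1 / (4 * l%:R * beta))
                then 0 else x e.

Definition good_for (xt : {set V} -> R) (T : tree_emb V) (F : {set {set V}}) : bool :=
  \sum_(f in MinvF T F) ty xt f <= 1 / 2.

Definition shattered (T : tree_emb V) (F : {set {set V}}) (Q : {set V}) : bool :=
  [exists t1 : tnode T, exists t2 : tnode T, [&& tleaf t1, tleaf t2, tmap t1 \in Q, tmap t2 \in Q &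
     ~~ connect (adj (tedges T :\: MinvF T F)) t1 t2]].

Definition shattered_comps (EH : {set {set V}}) (T : tree_emb V)
  (F : {set {set V}}) : {set {set V}} :=
  [set Q in components (EH :\: F) | shattered T F Q].

(* Z_F; a partition (A',B') of the shattered components is encoded by the
   subset P of shattered components going to A' (A' = cover P) *)
Definition ZF (EH : {set {set V}}) (q : nat) (S Tt : 'I_q -> {set V})
  (T : tree_emb V) (F : {set {set V}}) : {set {set V} * {set V}} :=
  let Sh := shattered_comps EH T F in
  [set (cover P :|: compQ (EH :\: F) (S i), cover (Sh :\: P) :|: compQ (EH :\: F) (Tt i))
   | P in powerset Sh,
     i in [set i : 'I_q | compQ (EH :\: F) (S i) :&: compQ (EH :\: F) (Tt i) == set0]].

Definition ZT (xt : {set V} -> R) (EH : {set {set V}}) (l q : nat)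
  (S Tt : 'I_q -> {set V}) (T : tree_emb V) : {set {set V} * {set V}} :=
  \bigcup_(F in powerset EH | (#|F| == l) && good_for xt T F) ZF EH S Tt T F.

End TreeEmb.

From HB Require Import structures.
From mathcomp Require Import all_boot all_order all_algebra.
From mathcomp Require Import reals exp ring.
From Stdlib Require List.
Import Order.TTheory GRing.Theory Num.Theory.

Set Implicit Arguments.
Unset Strict Implicit.
Unset Printing Implicit Defensive.

(* A shattered component [Q] of [(V, E(H) \ F)] has two leaves that are joined in
   the tree only through some edge [f] of [M^-1(F)].  The two sides of [T - f]
   then split [Q], so some edge of [E(H) \ F] inside [Q] lies in the cut
   [delta(X_f)] and contributes [1/(4 l beta)] to [y(f)]; distinct components give
   distinct edges.  Hence, for a good [F], at most [2 l beta] components are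
   shattered and [|Z_F| <= q 2^(2 l beta)], while there are at most
   ['C(n^2, l) <= n^(2 l)] sets [F] of [l] edges. *)

Lemma leq_card_bigcup (I T : finType) (P : pred I) (F : I -> {set T}) :
  (#|\bigcup_(i | P i) F i| <= \sum_(i | P i) #|F i|)%N.
Proof.
elim/big_rec2: _ => [|i B s _ IH]; first by rewrite cards0.
by rewrite (leq_trans (leq_card_setU _ _)) // leq_add2l.
Qed.

Lemma leq_imset2_card (aT1 aT2 rT : finType) (f : aT1 -> aT2 -> rT)
    (A1 : {set aT1}) (A2 : {set aT2}) :
  (#|f @2: (A1, A2)| <= #|A1| * #|A2|)%N.
Proof. by rewrite curry_imset2X -cardsX leq_imset_card. Qed.

Lemma ffact_leq_expn n k : (n ^_ k <= n ^ k)%N.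
Proof.
elim: k => [|k IH]; first by rewrite ffactn0.
by rewrite ffactnSr expnSr leq_mul // leq_subr.
Qed.

Lemma bin_leq_expn n k : ('C(n, k) <= n ^ k)%N.
Proof.
by rewrite (leq_trans _ (ffact_leq_expn n k)) // -bin_ffact leq_pmulr ?fact_gt0.
Qed.

Lemma card_subsets_of_pairs (T : finType) (A : {set {set T}}) (k : nat) :
  (forall e, e \in A -> #|e| = 2%N) ->
  (#|[set B : {set {set T}} | B \subset A & #|B| == k]| <= #|T| ^ (2 * k))%N.
Proof.
move=> hA; rewrite cards_draws expnM (leq_trans _ (bin_leq_expn _ _)) //.
rewrite leq_bin2l // (leq_trans _ (bin_leq_expn #|T| 2)) // -card_draws.
by apply/subset_leq_card/subsetP => e he; rewrite inE hA.
Qed.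

Section Connectivity.
Variable N : finType.
Implicit Types (Ed M tE : {set {set N}}) (X Q : {set N}).

Lemma adj_sym Ed : symmetric (adj Ed).
Proof. by move=> u w; rewrite /adj setUC. Qed.

Lemma connect_adj_sym Ed : connect_sym (adj Ed).
Proof. exact/sym_connect_sym/adj_sym. Qed.

Lemma ucutS Ed1 Ed2 X : Ed1 \subset Ed2 -> ucut Ed1 X \subset ucut Ed2 X.
Proof.
by move=> sub; apply/subsetP => e; rewrite !inE => /andP[/(subsetP sub) -> ->].
Qed.

Lemma card_setI_pair X (v w : N) :
  (v \in X) != (w \in X) -> #|[set v; w] :&: X| == 1%N.
Proof.
move=> vwX; wlog vX : v w vwX / v \in X.
  move=> IH; have [|nvX] := boolP (v \in X); first exact: IH.
  rewrite setUC; apply: IH; first by rewrite eq_sym.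
  by move: vwX; rewrite (negbTE nvX); case: (w \in X).
have wX : w \notin X by move: vwX; rewrite vX; case: (w \in X).
apply/cards1P; exists v; apply/setP => z; rewrite !inE.
have [->|_] := eqVneq z v; first by rewrite vX.
by case: eqP => [->|] //=; rewrite (negbTE wX).
Qed.

Lemma path_cross Ed X x p :
  path (adj Ed) x p -> (x \in X) != (last x p \in X) ->
  exists v w, [/\ adj Ed v w, v \in x :: p & (v \in X) != (w \in X)].
Proof.
elim: p x => [|y p IH] x /=; first by rewrite eqxx.
move=> /andP[xy yp] xpX; have [xyX | /negbNE/eqP xyX] := boolP ((x \in X) != (y \in X)).
  by exists x, y; rewrite mem_head.
have [|v [w [vw vp vwX]]] := IH y yp; first by rewrite -xyX.
by exists v, w; rewrite inE vp orbT.
Qed.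

Lemma component_eq Ed Q u :
  Q \in components Ed -> u \in Q -> Q = [set w | connect (adj Ed) u w].
Proof.
case/imsetP=> u0 _ ->; rewrite inE => u0u.
by apply/setP => w; rewrite !inE (same_connect (connect_adj_sym Ed) u0u).
Qed.

(* The component of some endpoint of [e]; for an edge of [Ed] all choices agree. *)
Definition edge_component Ed (e : {set N}) : {set N} :=
  if [pick u in e] is Some u then [set w | connect (adj Ed) u w] else set0.

Lemma edge_componentE Ed Q v w :
  Q \in components Ed -> adj Ed v w -> v \in Q -> edge_component Ed [set v; w] = Q.
Proof.
move=> hQ vw vQ; rewrite /edge_component (component_eq hQ vQ).
case: pickP => [u vwu|/(_ v)]; last by rewrite set21.
have vu : connect (adj Ed) v u.
  by move: vwu; rewrite !inE => /orP[] /eqP ->; rewrite ?connect0 ?connect1.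
by apply/setP => z; rewrite !inE (same_connect (connect_adj_sym Ed) vu).
Qed.

Lemma component_cut_edge Ed X Q u1 u2 :
  Q \in components Ed -> u1 \in Q -> u2 \in Q -> (u1 \in X) != (u2 \in X) ->
  exists2 e, e \in ucut Ed X & edge_component Ed e = Q.
Proof.
move=> hQ u1Q; have Q1 := component_eq hQ u1Q.
rewrite {1}Q1 inE => /connectP[p p1 ->] u12X.
have [v [w [vw vp vwX]]] := path_cross p1 u12X.
exists [set v; w]; first by rewrite inE card_setI_pair ?andbT.
by apply: edge_componentE hQ vw _; rewrite Q1 inE (path_connect p1 vp).
Qed.

Lemma path_through_removed_edge tE M x p :
  path (adj tE) x p -> uniq (x :: p) -> ~~ connect (adj (tE :\: M)) x (last x p) ->
  exists a b, [/\ [set a; b] \in M :&: tE,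
    connect (adj (tE :\ [set a; b])) x a & connect (adj (tE :\ [set a; b])) b (last x p)].
Proof.
elim: p x => [|y p IH] x /=; first by rewrite connect0.
move=> /andP[xy yp] /andP[xNp yp_uniq] nc.
have [xyM | xyNM] := boolP ([set x; y] \in M).
  exists x, y; split; rewrite ?inE ?xyM //.
  apply: (path_connect (p := p)); last exact: mem_last.
  apply: (sub_in_path (P := mem (y :: p))) yp; last by apply/allP.
  move=> u v uP vP; rewrite /adj in_setD1 => ->; rewrite andbT.
  apply: contraNneq xNp => uvxy.
  by have := set21 x y; rewrite -uvxy !inE => /orP[] /eqP ->.
have [|a [b [abM xa bz]]] := IH y yp yp_uniq.
  apply: contra nc; apply: connect_trans; apply: connect1.
  by rewrite /adj in_setD xyNM.
exists a, b; split => //; apply: connect_trans xa; apply: connect1.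
rewrite /adj in xy *; rewrite in_setD1 xy andbT; apply: contraNneq xyNM => ->.
by case/setIP: abM.
Qed.

Lemma connect_through_removed_edge tE M x z :
  connect (adj tE) x z -> ~~ connect (adj (tE :\: M)) x z ->
  exists a b, [/\ [set a; b] \in M :&: tE,
    connect (adj (tE :\ [set a; b])) x a & connect (adj (tE :\ [set a; b])) b z].
Proof.
case/connectP=> p0 p0P ->; case: (shortenP p0P) => p pP p_uniq _.
exact: path_through_removed_edge.
Qed.

End Connectivity.

Local Open Scope ring_scope.

Lemma card_bigcup_ler (R : numDomainType) (I T : finType) (P : pred I)
    (F : I -> {set T}) (K : R) :
  (forall i, P i -> #|F i|%:R <= K) -> #|\bigcup_(i | P i) F i|%:R <= #|P|%:R * K.
Proof.
move=> FK; apply: le_trans (_ : (\sum_(i | P i) #|F i|)%:R <= _).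
  by rewrite ler_nat leq_card_bigcup.
by rewrite natr_sum mulr_natl -sumr_const ler_sum.
Qed.

Section Capacities.
Variables (R : realType) (V : finType) (E : {set {set V}}) (x : {set V} -> R).
Variables (l : nat) (beta : R).

Lemma LARGE_sub : LARGE E x l beta \subset E.
Proof. by apply/subsetP => e; rewrite inE => /andP[]. Qed.

Lemma xtilde_LARGE e :
  e \in LARGE E x l beta -> xtilde E x l beta e = 1 / (4 * l%:R * beta).
Proof. by rewrite /xtilde => ->. Qed.

Lemma xtilde_ge0 e : 0 <= beta -> 0 <= x e -> 0 <= xtilde E x l beta e.
Proof.
move=> beta0 xe0; rewrite /xtilde; case: ifP => _; last by case: ifP.
by rewrite divr_ge0 // !mulr_ge0.
Qed.

End Capacities.

Section TreeEmbedding.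
Variables (R : realType) (V : finType) (E : {set {set V}}).

Lemma card_cut_mul_le (xt : {set V} -> R) (c : R) (Ed : {set {set V}}) (X : {set V}) :
  Ed \subset E -> (forall e, e \in E -> 0 <= xt e) -> (forall e, e \in Ed -> xt e = c) ->
  #|ucut Ed X|%:R * c <= xcut E xt X.
Proof.
move=> EdE xt0 xtc; rewrite /xcut (big_setID (ucut Ed X)) /= (setIidPr (ucutS X EdE)).
rewrite (eq_bigr (fun=> c)) => [|e]; last by rewrite inE => /andP[/xtc].
rewrite sumr_const mulr_natl lerDl sumr_ge0 // => e /setDP[].
by rewrite inE => /andP[/xt0].
Qed.

Variables (T : tree_emb V) (EH F : {set {set V}}).
Hypothesis hT : is_tree_emb E T.

Lemma leaf_side_mem (f : {set tnode T}) (a : tnode T) :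
  a \in f -> exists2 a', a' \in f &
  forall t, tleaf t -> (tmap t \in leaf_side f) = connect (adj (tedges T :\ f)) a' t.
Proof.
move=> af; rewrite /leaf_side; case: pickP => [a' a'f|/(_ a)]; last by rewrite af.
exists a' => // t lt; rewrite inE.
apply/existsP/idP => [[t' /and3P[lt' /eqP tt' a't']] | a't].
  by have [_ _ leaf_inj _] := hT; rewrite -(leaf_inj _ _ lt' lt tt').
by exists t; rewrite lt eqxx a't.
Qed.

Lemma leaf_side_separates (a b t1 t2 : tnode T) :
  [set a; b] \in tedges T -> tleaf t1 -> tleaf t2 ->
  connect (adj (tedges T :\ [set a; b])) a t1 ->
  connect (adj (tedges T :\ [set a; b])) b t2 ->
  (tmap t1 \in leaf_side [set a; b]) != (tmap t2 \in leaf_side [set a; b]).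
Proof.
move=> ab l1 l2 at1 bt2; have [[_ _ bridge] _ _ _] := hT.
have nab := bridge _ a b ab erefl.
have csym := connect_adj_sym (tedges T :\ [set a; b]).
have [a' a'ab a'side] := leaf_side_mem (set21 a b); rewrite !a'side //.
set Tab := tedges T :\ [set a; b] in nab csym at1 bt2 *.
case/set2P: a'ab => ->.
  have /negbTE -> : ~~ connect (adj Tab) a t2.
    by apply: contra nab => at2; rewrite (connect_trans at2) // csym.
  by rewrite at1.
have /negbTE -> : ~~ connect (adj Tab) b t1.
  by apply: contra nab => bt1; rewrite csym (connect_trans bt1) // csym.
by rewrite bt2.
Qed.

Lemma shattered_comp_cut_edge Q : Q \in shattered_comps EH T F ->
  exists2 f, f \in MinvF T F &
    exists2 e, e \in ucut (EH :\: F) (leaf_side f) & edge_component (EH :\: F) e = Q.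
Proof.
rewrite inE => /andP[QH /existsP[t1 /existsP[t2 /and5P[l1 l2 t1Q t2Q nt12]]]].
have [[_ Tconn _] _ _ _] := hT.
have [a [b [/setIP[abM ab] t1a bt2]]] := connect_through_removed_edge (Tconn t1 t2) nt12.
exists [set a; b] => //; apply: component_cut_edge QH t1Q t2Q _.
by apply: leaf_side_separates => //; rewrite connect_adj_sym.
Qed.

Lemma card_shattered_comps_le :
  (#|shattered_comps EH T F| <= \sum_(f in MinvF T F) #|ucut (EH :\: F) (leaf_side f)|)%N.
Proof.
pose comps (f : {set tnode T}) :=
  edge_component (EH :\: F) @: ucut (EH :\: F) (leaf_side f).
apply: (@leq_trans #|\bigcup_(f in MinvF T F) comps f|).
  apply/subset_leq_card/subsetP => Q /shattered_comp_cut_edge[f fM [e ef <-]].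
  by apply/bigcupP; exists f => //; apply: imset_f.
apply: leq_trans (leq_card_bigcup _ _) _.
by apply: leq_sum => f _; apply: leq_imset_card.
Qed.

Lemma card_shattered_comps_mul_le (xt : {set V} -> R) (c : R) :
  EH \subset E -> (forall e, e \in E -> 0 <= xt e) ->
  (forall e, e \in EH -> xt e = c) -> 0 <= c ->
  #|shattered_comps EH T F|%:R * c <= \sum_(f in MinvF T F) ty E xt f.
Proof.
move=> EHE xt0 xtc c0.
apply: le_trans (_ : (\sum_(f in MinvF T F) #|ucut (EH :\: F) (leaf_side f)|)%:R * c <= _).
  by rewrite ler_wpM2r // ler_nat card_shattered_comps_le.
rewrite natr_sum mulr_suml; apply: ler_sum => f _; apply: card_cut_mul_le => //.
- exact: subset_trans (subsetDl _ _) EHE.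
- by move=> e /setDP[/xtc].
Qed.

Lemma card_ZF_le q (S Tt : 'I_q -> {set V}) :
  (#|ZF EH S Tt T F| <= 2 ^ #|shattered_comps EH T F| * q)%N.
Proof.
rewrite (leq_trans (leq_imset2_card _ _ _)) // card_powerset leq_mul2l.
by rewrite (leq_trans (max_card _)) ?card_ord ?orbT.
Qed.

Lemma card_ZF_good_le (xt : {set V} -> R) (c B : R) q (S Tt : 'I_q -> {set V}) :
  EH \subset E -> (forall e, e \in E -> 0 <= xt e) ->
  (forall e, e \in EH -> xt e = c) -> 0 < c -> 1 / 2 <= B * c ->
  good_for E xt T F -> #|ZF EH S Tt T F|%:R <= q%:R * powR 2 B.
Proof.
move=> EHE xt0 xtc c0 Bc good.
have ShB : #|shattered_comps EH T F|%:R <= B.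
  rewrite -(ler_pM2r c0); apply: le_trans Bc.
  exact: le_trans (card_shattered_comps_mul_le EHE xt0 xtc (ltW c0)) good.
apply: le_trans (_ : (2 ^ #|shattered_comps EH T F| * q)%N%:R <= _).
  by rewrite ler_nat card_ZF_le.
rewrite natrM mulrC ler_wpM2l // natrX -powR_mulrn ?ler0n //.
by apply: ler_powR; rewrite ?ler1n.
Qed.

End TreeEmbedding.

Theorem lemma5p10 (R : realType) (V : finType) (E : {set {set V}})
  (hE : forall e, e \in E -> #|e| = 2%N)
  (q : nat) (S Tt : 'I_q -> {set V})
  (l : nat) (hl : (1 <= l)%N)
  (El : {set {set V}}) (hElE : El \subset E)
  (hEl : forall i, ell_edge_conn El (S i) (Tt i) l)
  (x : {set V} -> R)
  (hx01 : forall e, e \in E -> 0 <= x e <= 1)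
  (hxEl : forall e, e \in El -> x e = 1)
  (hxcut : forall i (X : {set V}), Tt i \subset X -> X \subset ~: S i ->
             (l.+1)%:R <= \sum_(e in ucut E X) x e)
  (beta : R) (hbeta : 1 <= beta)
  (D : seq (R * tree_emb V))
  (hD : good_distribution E beta (xtilde E x l beta) D) :
  forall p, List.In p D -> 0 < p.1 ->
    (#|ZT E (xtilde E x l beta) (LARGE E x l beta) l S Tt p.2|)%:R
      <= q%:R * (#|V|%:R) ^+ (2 * l) * powR 2 (2 * l%:R * beta).
Proof.
move=> p pD _; have [_ _ /(_ p pD) Tp _ _] := hD.
have l0 : 0 < l%:R :> R by rewrite ltr0n.
have beta0 : 0 < beta := lt_le_trans ltr01 hbeta.
set c := 1 / (4 * l%:R * beta).
have c0 : 0 < c by rewrite divr_gt0 // !mulr_gt0.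
have Bc : 2 * l%:R * beta * c = 1 / 2 by rewrite /c; field; rewrite !gt_eqF.
have xt0 e : e \in E -> 0 <= xtilde E x l beta e.
  by move=> /hx01/andP[xe0 _]; rewrite xtilde_ge0 // ltW.
have EHE := LARGE_sub E x l beta.
have EH2 e : e \in LARGE E x l beta -> #|e| = 2%N by move=> /(subsetP EHE)/hE.
have xtc := @xtilde_LARGE R V E x l beta.
rewrite mulrAC mulrC.
apply: le_trans (card_bigcup_ler (K := q%:R * powR 2 (2 * l%:R * beta)) _) _.
  by move=> F /and3P[_ _ /(card_ZF_good_le Tp S Tt EHE xt0 xtc c0)]; apply; rewrite Bc.
rewrite ler_wpM2r ?mulr_ge0 ?powR_ge0 // -natrX ler_nat.
apply: leq_trans _ (card_subsets_of_pairs l EH2).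
by apply/subset_leq_card/subsetP => F /and3P[FEH Fl _]; rewrite inE Fl andbT -powersetE.
Qed.
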